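(* Let $X$ be a topological space with a Borel measure $\mu$, let $\mathcal A$ be the family of $G_\delta$ subsets of $X$ that are $\mu$-null, and let $\mathcal B=\{\{x\}:x\in X\}$. Then One has a winning strategy in $G_1(\mathscr N[\mathcal A],\neg\mathcal O(X,\mathcal B))$ if and only if $X$ is $\mu$-null, i.e., $\mu$ is the zero measure.
   Context: $\mathcal O(X,\mathcal B)$ with $\mathcal B$ the singletons is the set of open covers $\mathscr U$ of $X$ with $X\notin\mathscr U$. $\mathscr N[\mathcal A]=\{\mathscr N(A):A\in\mathcal A\}$ with $\mathscr N(A)$ the set of open $U\neq X$ with $A\subseteq U$; in $G_1(\mathscr N[\mathcal A],\neg\mathcal O(X,\mathcal B))$, at each inning $n\in\omega$ One plays some $A_n\in\mathcal A$, Two answers with an open $U_n\supseteq A_n$, $U_n\neq X$, and One wins iff $\{U_n:n\in\omega\}\in\mathcal O(X,\mathcal B)$. A strategy for One maps finite sequences of Two's moves to moves; it is winning if One wins every play following it. *)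

From HB Require Import structures.
From mathcomp Require Import all_boot all_order all_algebra.
From mathcomp Require Import all_classical all_reals all_analysis.
From mathcomp Require Import borel_hierarchy.
Set Implicit Arguments. Unset Strict Implicit. Unset Printing Implicit Defensive.
Local Open Scope classical_set_scope.

Notation BorelType T := (g_sigma_algebraType (@open T)).

Definition null_Gdelta (R : realType) (T : ptopologicalType)
  (mu : measure (BorelType T) R) : set (set T) :=
  [set A | Gdelta A /\ mu A = 0%E].

Definition singleton_sets (T : topologicalType) : set (set T) := [set [set x] | x in setT].

Definition O_cover (T : topologicalType) (B : set (set T)) (C : set (set T)) : Prop :=
  (forall V, C V -> open V) /\ ~ C setT /\
  (forall b, B b -> exists2 V, C V & b `<=` V).

Definition Nbhd (T : topologicalType) (A : set T) : set (set T) :=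
  [set U | open U /\ U <> setT /\ A `<=` U].

(* A strategy for One maps finite sequences of Two's moves to One's moves. *)
Definition strategy_One (T : topologicalType) := seq (set T) -> set T.

Definition follows (T : topologicalType) (sigma : strategy_One T) (U : nat -> set T) : Prop :=
  forall n, Nbhd (sigma (mkseq U n)) (U n).

Definition One_wins_G1 (T : topologicalType) (calA calB : set (set T)) : Prop :=
  exists sigma : strategy_One T,
    (forall s, calA (sigma s)) /\
    (forall U, follows sigma U -> O_cover calB (range U)).

From mathcomp Require Import all_boot all_order all_algebra.
From mathcomp Require Import all_classical all_reals all_analysis.
From mathcomp Require Import borel_hierarchy.
Local Open Scope classical_set_scope.

(* If mu is the zero measure, One plays X itself, a null G_delta set that Two
   cannot answer.  Conversely, fix One's strategy sigma and write each move
   sigma(h) as a countable intersection of open sets W(sigma h, k).  If Two only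
   ever answers with such a W, the histories that can occur are coded by finite
   sequences of indices k, so there are countably many of them, and the union of
   One's moves along them is null.  When mu(X) > 0 some point x lies outside
   this union; at every stage Two answers with a W missing x, which is a legal
   move, and the resulting play never covers x. *)

Lemma Gdelta_Borel_measurable (T : ptopologicalType) (A : set T) :
  Gdelta A -> @measurable _ (BorelType T) A.
Proof.
by case=> F Fo ->; apply: bigcapT_measurable => k; exact: sub_gen_smallest.
Qed.

Lemma countable_negligible_bigcup d (T : sigmaRingType d) (R : realFieldType)
    (mu : measure T R) (I : countType) (F : I -> set T) :
  (forall i, mu.-negligible (F i)) -> mu.-negligible (\bigcup_i F i).
Proof.
move=> F0; pose G n := if unpickle n is Some i then F i else set0.
apply: (@negligibleS _ _ _ _ (\bigcup_n G n)).
  by move=> x [i _ Fix]; exists (pickle i) => //; rewrite /G pickleK.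
apply: negligible_bigcup => n; rewrite /G.
by case: (unpickle n) => [i|]; [exact: F0|exact: negligible_set0].
Qed.

Lemma exists_notin_negligible d (T : measurableType d) (R : realFieldType)
    (mu : measure T R) (N : set T) :
  mu setT != 0%E -> mu.-negligible N -> exists x, ~ N x.
Proof.
move=> muT [M [mM M0 NM]]; apply/setTPn/eqP => NT; move: muT.
by rewrite (@measure_negligible _ _ _ mu) ?eqxx // -NT; exists M.
Qed.

Section Gdelta_components.
Context {T : topologicalType}.

(* The junk value [setT] off G_delta sets keeps every component open. *)
Definition Gdelta_seq (A : set T) : (set T)^nat :=
  if pselect (Gdelta A) is left GA then sval (cid2 GA) else fun=> setT.

Lemma open_Gdelta_seq A k : open (Gdelta_seq A k).
Proof.
by rewrite /Gdelta_seq; case: pselect => [GA|_]; [case: cid2|exact: openT].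
Qed.

Lemma Gdelta_seqE A : Gdelta A -> A = \bigcap_k Gdelta_seq A k.
Proof. by rewrite /Gdelta_seq; case: pselect => // GA _; case: cid2. Qed.

Lemma Gdelta_seq_notin A x : Gdelta A -> ~ A x -> exists k, ~ Gdelta_seq A k x.
Proof.
move=> /Gdelta_seqE AE Ax; apply/existsNP => Wx.
by apply: Ax; rewrite AE => k _; exact: Wx.
Qed.

Lemma Nbhd_Gdelta_seq A k x :
  Gdelta A -> ~ Gdelta_seq A k x -> Nbhd A (Gdelta_seq A k).
Proof.
move=> /Gdelta_seqE AE Wx; split; first exact: open_Gdelta_seq.
split; first by move=> WT; apply: Wx; rewrite WT.
by rewrite {1}AE => y; apply.
Qed.

End Gdelta_components.

Section plays.
Context {T : topologicalType}.
Variable sigma : strategy_One T.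

Fixpoint history (r : seq (set T) -> set T) (n : nat) : seq (set T) :=
  if n is m.+1 then rcons (history r m) (r (history r m)) else [::].

Definition play (r : seq (set T) -> set T) (n : nat) : set T := r (history r n).

Lemma mkseq_play r n : mkseq (play r) n = history r n.
Proof. by elim: n => //= n IH; rewrite mkseqS IH. Qed.

Lemma follows_play r :
  (forall n, Nbhd (sigma (history r n)) (play r n)) -> follows sigma (play r).
Proof. by move=> rN n; rewrite mkseq_play. Qed.

Definition coded_history (ks : seq nat) : seq (set T) :=
  foldl (fun h k => rcons h (Gdelta_seq (sigma h) k)) [::] ks.

Lemma history_coded r :
  (forall h, exists k, r h = Gdelta_seq (sigma h) k) ->
  forall n, exists ks, history r n = coded_history ks.
Proof.
move=> rW; elim=> [|n [ks IH]]; first by exists [::].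
have [k rk] := rW (history r n); exists (rcons ks k).
by rewrite /coded_history foldl_rcons -/(coded_history ks) /= rk -IH.
Qed.

Hypothesis sigma_Gdelta : forall h, Gdelta (sigma h).

Lemma evading_play x : (forall ks, ~ sigma (coded_history ks) x) ->
  exists2 U, follows sigma U & forall n, ~ U n x.
Proof.
move=> x_out.
have /choice[c c_out] : forall h, exists k, ~ sigma h x -> ~ Gdelta_seq (sigma h) k x.
  move=> h; have [shx|nshx] := pselect (sigma h x); first by exists 0%N.
  by have [k Wk] := Gdelta_seq_notin _ _ (sigma_Gdelta h) nshx; exists k.
pose r h := Gdelta_seq (sigma h) (c h).
have rx n : ~ play r n x.
  have [ks hn] : exists ks, history r n = coded_history ks.
    by apply: history_coded => h; exists (c h).
  by apply: c_out; rewrite hn; exact: x_out.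
exists (play r) => //; apply: follows_play => n.
exact: Nbhd_Gdelta_seq _ _ _ (sigma_Gdelta _) (rx n).
Qed.

End plays.

Lemma One_wins_G1_setT (T : topologicalType) (calA calB : set (set T)) :
  calA setT -> One_wins_G1 calA calB.
Proof.
move=> AT; exists (fun=> setT); split => // U /(_ 0%N) [_ [UT TU]].
by exfalso; apply: UT; apply/seteqP.
Qed.

Lemma not_O_cover_singletons (T : topologicalType) (U : nat -> set T) x :
  (forall n, ~ U n x) -> ~ O_cover (@singleton_sets T) (range U).
Proof.
move=> Ux [_ [_ cov]]; have [_ [n _ <-]] := cov [set x] (ex_intro2 _ _ x I erefl).
by move/(_ x erefl); exact: Ux.
Qed.

Theorem mainTheorem19 (R : realType) (T : ptopologicalType)
  (mu : measure (BorelType T) R) :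
  One_wins_G1 (null_Gdelta mu) (@singleton_sets T) <-> mu setT = 0%E.
Proof.
split=> [[sigma [sA swin]]|mu0]; last first.
  by apply: One_wins_G1_setT; split => //; exact/open_Gdelta/openT.
have [//|muT] := eqVneq (mu setT) 0%E; exfalso.
have sG h : Gdelta (sigma h) by have [] := sA h.
have [x xN] : exists x, ~ (\bigcup_ks sigma (coded_history sigma ks)) x.
  apply: exists_notin_negligible muT _; apply: countable_negligible_bigcup => ks.
  have [sG0 mu_s0] := sA (coded_history sigma ks).
  exists (sigma (coded_history sigma ks)).
  by split; [exact: Gdelta_Borel_measurable|exact: mu_s0|exact: subset_refl].
have [U fU Ux] : exists2 U, follows sigma U & forall n, ~ U n x.
  by apply: evading_play => // ks xs; apply: xN; exists ks.
exact: not_O_cover_singletons Ux (swin U fU).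
Qed.
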